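(* Let $\Lambda=(W_j,\Lambda_j,v_j)_{j\in\mathbb{J}}$ be a Parseval g-fusion frame for $H$, let $\mathbb{I}$ be a finite subset of $\mathbb{J}$ and $\mathbb{I}^c=\mathbb{J}\setminus\mathbb{I}$. Then for every $f\in H$, $$\sum_{j\in\mathbb{I}}v_j^2\Vert \Lambda_j \pi_{W_j}f\Vert^2-\Big\Vert \sum_{j\in\mathbb{I}}v_j^2 \pi_{W_j}\Lambda^*_j \Lambda_j \pi_{W_j}f\Big\Vert^2 =\sum_{j\in\mathbb{I}^c}v_j^2\Vert \Lambda_j \pi_{W_j}f\Vert^2-\Big\Vert \sum_{j\in\mathbb{I}^c}v_j^2 \pi_{W_j}\Lambda^*_j \Lambda_j \pi_{W_j}f\Big\Vert^2,$$ and moreover $$\sum_{j\in\mathbb{I}}v_j^2\Vert \Lambda_j \pi_{W_j}f\Vert^2+\Big\Vert \sum_{j\in\mathbb{I}^c}v_j^2 \pi_{W_j}\Lambda^*_j \Lambda_j \pi_{W_j}f\Big\Vert^2\geq \frac{3}{4}\Vert f\Vert^2.$$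
   Context: $H$ is a separable Hilbert space, $\mathbb{J}\subseteq\mathbb{Z}$, $\{H_j\}_{j\in\mathbb{J}}$ are separable Hilbert spaces, $\Lambda_j\in\mathcal{B}(H,H_j)$, $W_j$ are closed subspaces of $H$, $v_j>0$, and $\pi_V$ denotes the orthogonal projection onto a closed subspace $V$. The triple $\Lambda=(W_j,\Lambda_j,v_j)$ is a Parseval g-fusion frame for $H$ if $\sum_{j\in\mathbb{J}}v_j^2\Vert\Lambda_j\pi_{W_j}f\Vert^2=\Vert f\Vert^2$ for all $f\in H$. *)

From HB Require Import structures.
From mathcomp Require Import all_boot all_order all_algebra.
From mathcomp Require Import all_classical all_reals all_analysis.
Set Implicit Arguments. Unset Strict Implicit. Unset Printing Implicit Defensive.
Import Order.TTheory GRing.Theory Num.Theory.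
Import numFieldNormedType.Exports.
Local Open Scope classical_set_scope.
Local Open Scope ring_scope.

Section Defs.
Variable R : realType.

Definition is_inner_product (V : normedModType R) (ip : V -> V -> R) : Prop :=
  [/\ (forall x y, ip x y = ip y x),
      (forall (a : R) x y z, ip (a *: x + y) z = a * ip x z + ip y z)
    & (forall x, ip x x = `|x| ^+ 2)].

Definition separable (T : topologicalType) : Prop :=
  exists D : set T, countable D /\ closure D = setT.

Definition closed_subspace (V : normedModType R) (W : set V) : Prop :=
  [/\ closed W, W 0 & forall (a : R) x y, W x -> W y -> W (a *: x + y)].

Definition is_orth_proj (V : normedModType R) (ip : V -> V -> R)
  (W : set V) (P : V -> V) : Prop :=
  forall f, W (P f) /\ (forall w, W w -> ip (f - P f) w = 0).

Definition is_adjoint (U V : normedModType R) (ipU : U -> U -> R)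
  (ipV : V -> V -> R) (T : U -> V) (Tstar : V -> U) : Prop :=
  forall x y, ipV (T x) y = ipU x (Tstar y).

(* unconditional sum: the net of finite partial sums over finite subsets
   of A converges to x *)
Definition has_sum (V : normedModType R) (A : set int) (u : int -> V) (x : V)
  : Prop :=
  forall e : R, 0 < e -> exists F0 : set int,
    [/\ finite_set F0, F0 `<=` A &
      forall F : set int, finite_set F -> F0 `<=` F -> F `<=` A ->
        `|x - \sum_(j \in F) u j| < e].
End Defs.

From HB Require Import structures.
From mathcomp Require Import all_boot all_order all_algebra.
From mathcomp Require Import all_classical all_reals all_analysis.
From mathcomp Require Import ring lra.
Import Order.TTheory GRing.Theory Num.Theory.
Import numFieldNormedType.Exports.
Local Open Scope classical_set_scope.
Local Open Scope ring_scope.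
Set Implicit Arguments. Unset Strict Implicit. Unset Printing Implicit Defensive.

(* Polarizing the Parseval identity gives <f, g> = sum_j v_j^2 <Λ_j π_j f, Λ_j π_j g>.
   For finite G and y = f - S_G f, with S_G f = sum_(j in G) v_j^2 π_j Λ_j^* Λ_j π_j f,
   |y|^2 = <f, y> - <S_G f, y> is the tail over J \ G of that series; bounding it
   termwise by 2ab <= a^2 + b^2 gives |y|^2 <= |f|^2 - sum_(j in G) v_j^2 |Λ_j π_j f|^2.
   Hence the frame operator is the identity, the sums over J \ I are |f|^2 - c and
   f - S_I f with c = <S_I f, f> = sum_(j in I) v_j^2 |Λ_j π_j f|^2, and the inequality
   is |S_I f - f/2|^2 >= 0. *)

Section UnconditionalSum.
Variables (R : realType) (V : normedModType R) (A : set int).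

Lemma has_sum_joint (u w : int -> V) x y e : 0 < e ->
  has_sum A u x -> has_sum A w y -> exists F0 : set int,
  [/\ finite_set F0, F0 `<=` A &
    forall F, finite_set F -> F0 `<=` F -> F `<=` A ->
      `|x - \sum_(j \in F) u j| < e /\ `|y - \sum_(j \in F) w j| < e].
Proof.
move=> e0 /(_ e e0)[Fu [fFu FuA hFu]] /(_ e e0)[Fw [fFw FwA hFw]].
exists (Fu `|` Fw); split; [by rewrite finite_setU | by rewrite subUset |].
by move=> F fF; rewrite subUset => -[FuF FwF] FA; split; [exact: hFu | exact: hFw].
Qed.

Lemma eq_has_sum (u w : int -> V) x :
  (forall j, A j -> u j = w j) -> has_sum A u x -> has_sum A w x.
Proof.
move=> uw hu e /hu[F0 [fF0 F0A hF0]]; exists F0; split=> // F fF F0F FA.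
have <- : \sum_(j \in F) u j = \sum_(j \in F) w j.
  by apply: eq_fsbigr => j; rewrite in_setE => /FA /uw.
exact: hF0.
Qed.

Lemma has_sumD (u w : int -> V) x y :
  has_sum A u x -> has_sum A w y -> has_sum A (u \+ w) (x + y).
Proof.
move=> hu hw e e0; have e20 : 0 < e / 2 by lra.
have [F0 [fF0 F0A hF0]] := has_sum_joint e20 hu hw.
exists F0; split=> // F fF F0F FA; have [hx hy] := hF0 F fF F0F FA.
rewrite fsbig_split //= opprD addrACA.
by apply: le_lt_trans (ler_normD _ _) _; lra.
Qed.

Lemma has_sumZ k (u : int -> V) x :
  has_sum A u x -> has_sum A (fun j => k *: u j) (k *: x).
Proof.
move=> hu e e0; have ek0 : 0 < e / (`|k| + 1) by rewrite divr_gt0 // ltr_wpDl.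
have [F0 [fF0 F0A hF0]] := hu _ ek0; exists F0; split=> // F fF F0F FA.
have -> : \sum_(j \in F) k *: u j = k *: \sum_(j \in F) u j.
  by rewrite !fsbig_finite // scaler_sumr.
have := hF0 F fF F0F FA; rewrite ltr_pdivlMr ?ltr_wpDl // -scalerBr normrZ.
by have := normr_ge0 (x - \sum_(j \in F) u j); nra.
Qed.

Lemma has_sumB (u w : int -> V) x y :
  has_sum A u x -> has_sum A w y -> has_sum A (u \- w) (x - y).
Proof.
move=> hu /(has_sumZ (-1)) hw; rewrite -scaleN1r.
by apply: eq_has_sum (has_sumD hu hw) => j _ /=; rewrite scaleN1r.
Qed.

Lemma has_sum_setD (u : int -> V) x B : finite_set B -> B `<=` A ->
  has_sum A u x -> has_sum (A `\` B) u (x - \sum_(j \in B) u j).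
Proof.
move=> fB BA hu e /hu[F0 [fF0 F0A hF0]].
exists (F0 `\` B); split; [exact: finite_setD | by move=> j [/F0A] |].
move=> F fF F0F FAB.
have fBF : finite_set (B `|` F) by rewrite finite_setU.
have F0BF : F0 `<=` B `|` F.
  by move=> j F0j; have [Bj|nBj] := pselect (B j); [left | right; apply: F0F].
have BFA : B `|` F `<=` A by rewrite subUset; split=> // j /FAB[].
have BF0 : B `&` F `<=` set0 by move=> j [Bj /FAB[]].
by have := hF0 _ fBF F0BF BFA; rewrite fsbigU0 // opprD addrA.
Qed.

End UnconditionalSum.

Lemma has_sum_le (R : realType) (A : set int) (u w : int -> R) x y :
  has_sum A u x -> has_sum A w y -> (forall j, A j -> u j <= w j) -> x <= y.
Proof.
move=> hu hw uw; apply/ler_addgt0Pr => e e0; have e20 : 0 < e / 2 by lra.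
have [F [fF FA /(_ F fF (@subset_refl _ F) FA)]] := has_sum_joint e20 hu hw.
have : \sum_(j \in F) u j <= \sum_(j \in F) w j.
  rewrite !fsbig_finite // big_seq [leRHS]big_seq; apply: ler_sum => j.
  by rewrite in_fset_set // in_setE => /FA /uw.
by rewrite !ltr_norml => ? [/andP[? ?] /andP[? ?]]; lra.
Qed.

Section InnerProduct.
Variables (R : realType) (V : normedModType R) (ip : V -> V -> R).
Hypothesis hip : is_inner_product ip.

Lemma ipC x y : ip x y = ip y x.
Proof. by case: hip. Qed.

Lemma ipZDl a x y z : ip (a *: x + y) z = a * ip x z + ip y z.
Proof. by case: hip. Qed.

Lemma ipxx x : ip x x = `|x| ^+ 2.
Proof. by case: hip. Qed.

Lemma ip0l z : ip 0 z = 0.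
Proof. by have := ipZDl 1 0 0 z; rewrite scaler0 addr0 mul1r; lra. Qed.

Lemma ipDl x y z : ip (x + y) z = ip x z + ip y z.
Proof. by rewrite -[x in LHS]scale1r ipZDl mul1r. Qed.

Lemma ipZl a x z : ip (a *: x) z = a * ip x z.
Proof. by rewrite -[a *: x]addr0 ipZDl ip0l addr0. Qed.

Lemma ipBl x y z : ip (x - y) z = ip x z - ip y z.
Proof. by rewrite -scaleN1r ipDl ipZl mulN1r. Qed.

Lemma ipDr x y z : ip z (x + y) = ip z x + ip z y.
Proof. by rewrite ipC ipDl !(ipC _ z). Qed.

Lemma ipZr a x z : ip z (a *: x) = a * ip z x.
Proof. by rewrite ipC ipZl ipC. Qed.

Lemma ip_suml (I : Type) (r : seq I) (u : I -> V) z :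
  ip (\sum_(j <- r) u j) z = \sum_(j <- r) ip (u j) z.
Proof.
elim: r => [|j r IH]; first by rewrite !big_nil ip0l.
by rewrite !big_cons ipDl IH.
Qed.

Lemma ipxx_eq0 x : ip x x = 0 -> x = 0.
Proof. by rewrite ipxx => /eqP; rewrite sqrf_eq0 normr_eq0 => /eqP. Qed.

Lemma sqr_normDZ x a y :
  `|x + a *: y| ^+ 2 = `|x| ^+ 2 + 2 * a * ip x y + a ^+ 2 * `|y| ^+ 2.
Proof. by rewrite -!ipxx ipDl !ipDr !ipZl !ipZr (ipC y x); ring. Qed.

Lemma sqr_normD x y : `|x + y| ^+ 2 = `|x| ^+ 2 + 2 * ip x y + `|y| ^+ 2.
Proof. by rewrite -[y in LHS]scale1r sqr_normDZ; ring. Qed.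

Lemma sqr_normB x y : `|x - y| ^+ 2 = `|x| ^+ 2 - 2 * ip x y + `|y| ^+ 2.
Proof. by rewrite -scaleN1r sqr_normDZ; ring. Qed.

Lemma ip_polar x y : ip x y = (`|x + y| ^+ 2 - `|x - y| ^+ 2) / 4.
Proof. by rewrite sqr_normD sqr_normB; field. Qed.

Lemma ip_le_sqr_norm x y : 2 * ip x y <= `|x| ^+ 2 + `|y| ^+ 2.
Proof. by have := sqr_ge0 `|x - y|; rewrite sqr_normB; lra. Qed.

Lemma three_quarters_le x y : 3 / 4 * `|x| ^+ 2 <= ip y x + `|x - y| ^+ 2.
Proof.
have := sqr_ge0 `|y + (- 2^-1) *: x|.
by rewrite sqr_normDZ sqr_normB (ipC x y); lra.
Qed.

End InnerProduct.

Section OrthogonalProjection.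
Variables (R : realType) (V : normedModType R) (ip : V -> V -> R).
Variables (W : set V) (P : V -> V).
Hypotheses (hip : is_inner_product ip) (hW : closed_subspace W).
Hypothesis hP : is_orth_proj ip W P.

Lemma ip_orth_projl x w : W w -> ip (P x) w = ip x w.
Proof.
by move=> Ww; have /eqP := (hP x).2 w Ww; rewrite (ipBl hip) subr_eq0 => /eqP.
Qed.

Lemma ip_orth_proj x y : ip (P x) y = ip x (P y).
Proof.
rewrite (ipC hip (P x)) -(ip_orth_projl y (hP x).1) (ipC hip (P y)).
exact: ip_orth_projl (hP y).1.
Qed.

Lemma orth_projZD a x y : P (a *: x + y) = a *: P x + P y.
Proof.
have [_ _ Wlin] := hW; set z := a *: x + y; set d := P z - (a *: P x + P y).
have Wd : W d.
  rewrite /d addrC -scaleN1r; apply: (Wlin); last exact: (hP z).1.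
  by apply: (Wlin); [exact: (hP x).1 | exact: (hP y).1].
have orth_d u : ip (u - P u) d = 0 by exact: (hP u).2.
have d_eq : d = a *: (x - P x) + (y - P y) - (z - P z).
  by rewrite /d /z scalerBr addrACA -opprD opprB [RHS]addrC -[RHS]addrA addKr.
apply/eqP; rewrite -subr_eq0 -/d; apply/eqP/(ipxx_eq0 hip).
by rewrite {1}d_eq (ipBl hip) ipZDl // !orth_d mulr0 !addr0 subrr.
Qed.

Lemma orth_projD x y : P (x + y) = P x + P y.
Proof. by rewrite -[x in LHS]scale1r orth_projZD scale1r. Qed.

Lemma orth_projB x y : P (x - y) = P x - P y.
Proof. by rewrite -scaleN1r addrC orth_projZD addrC scaleN1r. Qed.

End OrthogonalProjection.

Section ParsevalGFusionFrame.
Context {R : realType} {H : normedModType R} {ip : H -> H -> R} {J : set int}.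
Context {Hs : int -> normedModType R} {ips : forall j, Hs j -> Hs j -> R}.
Context {L : forall j, {linear H -> Hs j}} {Ls : forall j, Hs j -> H}.
Context {W : int -> set H} {P : int -> H -> H} {v : int -> R}.
(* Otherwise Set Implicit Arguments would make the index j implicit. *)
Arguments ips : clear implicits.
Arguments L : clear implicits.
Arguments Ls : clear implicits.
Hypotheses (hip : is_inner_product ip)
  (hips : forall j, J j -> is_inner_product (ips j))
  (hadj : forall j, J j -> is_adjoint ip (ips j) (L j) (Ls j))
  (hWP : forall j, J j -> closed_subspace (W j) /\ is_orth_proj ip (W j) (P j)).

Definition coef_sq f j := v j ^+ 2 * `|L j (P j f)| ^+ 2.

Definition coef_ip f g j := v j ^+ 2 * ips j (L j (P j f)) (L j (P j g)).

Definition frame_term f j := v j ^+ 2 *: P j (Ls j (L j (P j f))).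

Lemma coef_ipxx j f : J j -> coef_ip f f j = coef_sq f j.
Proof. by move=> Jj; rewrite /coef_ip (ipxx (hips Jj)). Qed.

Lemma coef_ip_polar j f g : J j ->
  coef_ip f g j = (coef_sq (f + g) j - coef_sq (f - g) j) / 4.
Proof.
move=> Jj; have [hW hP] := hWP Jj.
rewrite /coef_ip /coef_sq (orth_projD hip hW hP) (orth_projB hip hW hP).
by rewrite raddfD raddfB (ip_polar (hips Jj)); field.
Qed.

Lemma coef_ip_le j f g : J j -> 2 * coef_ip f g j <= coef_sq f j + coef_sq g j.
Proof.
move=> Jj; rewrite /coef_ip /coef_sq mulrCA -mulrDr ler_wpM2l ?sqr_ge0 //.
exact: (ip_le_sqr_norm (hips Jj) (L j (P j f))).
Qed.

Lemma ip_frame_term j f g : J j -> ip (frame_term f j) g = coef_ip f g j.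
Proof.
move=> Jj; have [_ hP] := hWP Jj.
rewrite /frame_term /coef_ip (ipZl hip) (ip_orth_proj hip hP) (ipC hip).
by rewrite -hadj // (ipC (hips Jj)).
Qed.

Lemma ip_frame_sum F f g : finite_set F -> F `<=` J ->
  ip (\sum_(j \in F) frame_term f j) g = \sum_(j \in F) coef_ip f g j.
Proof.
move=> fF FJ; rewrite !fsbig_finite // (ip_suml hip); apply: eq_big_seq => j.
by rewrite in_fset_set // in_setE => /FJ /ip_frame_term ->.
Qed.

Hypothesis hpars : forall f, has_sum J (coef_sq f) (`|f| ^+ 2).

Lemma has_sum_coef_ip f g : has_sum J (coef_ip f g) (ip f g).
Proof.
have -> : ip f g = 4^-1 *: (`|f + g| ^+ 2 - `|f - g| ^+ 2).
  by rewrite (ip_polar hip) mulrC.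
apply: eq_has_sum (has_sumZ _ (has_sumB (hpars _) (hpars _))) => j Jj.
by rewrite coef_ip_polar // mulrC.
Qed.

Lemma sqr_norm_frame_residual G f : finite_set G -> G `<=` J ->
  `|f - \sum_(j \in G) frame_term f j| ^+ 2 <= `|f| ^+ 2 - \sum_(j \in G) coef_sq f j.
Proof.
move=> fG GJ; set y := f - _.
have sqr_norm_y : `|y| ^+ 2 = ip f y - \sum_(j \in G) coef_ip f y j.
  by rewrite -(ipxx hip) {1}/y (ipBl hip) ip_frame_sum.
have tail_ip := has_sum_setD fG GJ (has_sum_coef_ip f y); rewrite -sqr_norm_y in tail_ip.
have tail_f := has_sum_setD fG GJ (hpars f).
have tail_y := has_sum_setD fG GJ (hpars y).
have tail_le j : (J `\` G) j ->
    coef_ip f y j + coef_ip f y j <= coef_sq f j + coef_sq y j.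
  by case=> Jj _; have := coef_ip_le f y Jj; lra.
have := has_sum_le (has_sumD tail_ip tail_ip) (has_sumD tail_f tail_y) tail_le.
have : 0 <= \sum_(j \in G) coef_sq y j.
  by apply: fsumr_ge0 => j _; rewrite mulr_ge0 ?sqr_ge0.
lra.
Qed.

Lemma ip_frame_sum_self F f : finite_set F -> F `<=` J ->
  ip (\sum_(j \in F) frame_term f j) f = \sum_(j \in F) coef_sq f j.
Proof.
move=> fF FJ; rewrite ip_frame_sum //.
by apply: eq_fsbigr => j; rewrite in_setE => /FJ /coef_ipxx.
Qed.

Lemma has_sum_frame_term f : has_sum J (frame_term f) f.
Proof.
move=> e e0; have [F0 [fF0 F0J hF0]] := hpars f (exprn_gt0 2 e0).
exists F0; split=> // G fG F0G GJ.
have := sqr_norm_frame_residual f fG GJ.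
have := hF0 G fG F0G GJ; rewrite ltr_norml => /andP[_ lt_e2] le_e2.
by have := normr_ge0 (f - \sum_(j \in G) frame_term f j); nra.
Qed.

End ParsevalGFusionFrame.

Theorem corollary3p1 (R : realType)
  (H : completeNormedModType R) (ip : H -> H -> R)
  (J : set int)
  (Hs : int -> completeNormedModType R) (ips : forall j, Hs j -> Hs j -> R)
  (L : forall j, {linear H -> Hs j}) (Ls : forall j, Hs j -> H)
  (W : int -> set H) (P : int -> H -> H) (v : int -> R)
  (I : set int) :
  is_inner_product ip -> separable H ->
  (forall j, J j -> is_inner_product (ips j) /\ separable (Hs j)) ->
  (forall j, J j -> continuous (L j)) ->
  (forall j, J j -> is_adjoint ip (ips j) (L j) (Ls j)) ->
  (forall j, J j -> closed_subspace (W j) /\ is_orth_proj ip (W j) (P j)) ->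
  (forall j, J j -> 0 < v j) ->
  (* Parseval g-fusion frame *)
  (forall f : H,
     has_sum J (fun j => v j ^+ 2 * `|L j (P j f)| ^+ 2) (`|f| ^+ 2)) ->
  finite_set I -> I `<=` J ->
  forall f : H,
  exists (s : R) (x : H),
  [/\ has_sum (J `\` I) (fun j => v j ^+ 2 * `|L j (P j f)| ^+ 2) s,
      has_sum (J `\` I) (fun j => v j ^+ 2 *: P j (Ls j (L j (P j f)))) x,
      \sum_(j \in I) v j ^+ 2 * `|L j (P j f)| ^+ 2
        - `|\sum_(j \in I) v j ^+ 2 *: P j (Ls j (L j (P j f)))| ^+ 2
      = s - `|x| ^+ 2
    & \sum_(j \in I) v j ^+ 2 * `|L j (P j f)| ^+ 2 + `|x| ^+ 2
      >= 3 / 4 * `|f| ^+ 2].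
Proof.
move=> hip _ hJ _ hadj hWP _ hpars fI IJ f.
have hips j (Jj : J j) := (hJ j Jj).1.
pose S := \sum_(j \in I) v j ^+ 2 *: P j (Ls j (L j (P j f))).
have ip_Sf : ip S f = \sum_(j \in I) v j ^+ 2 * `|L j (P j f)| ^+ 2.
  exact (ip_frame_sum_self hip hips hadj hWP f fI IJ).
exists (`|f| ^+ 2 - \sum_(j \in I) v j ^+ 2 * `|L j (P j f)| ^+ 2), (f - S); split.
- exact: has_sum_setD.
- exact: has_sum_setD (has_sum_frame_term hip hips hadj hWP hpars f).
- by rewrite -ip_Sf (sqr_normB hip) (ipC hip f); ring.
- by rewrite -ip_Sf; exact: three_quarters_le.
Qed.
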